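(* Fix an integer $d\ge 1$, $h\in[0,1]$ with $hd\in\mathbb{Z}$, and $p\in(0,\tfrac12]$. Consider the binary node-classification setting described in the context, with training set containing nodes of both classes, and the heterophilous one-layer linear GNN $F'(\mathbf{X})=(\mathbf{X}\,\Vert\,\mathbf{A}\mathbf{X})\mathbf{W}$, where $\Vert$ is row-wise concatenation, so each node $i$ is represented by the $4$-dimensional row $\mathbf{u}_i=[\mathbf{x}_i,\ \sum_{j\in N_1(i)}\mathbf{x}_j]$ and $\mathbf{W}$ is $4\times 2$. Let $\mathbf{R}$ be the $2\times 4$ matrix whose rows are the (common) representation $\mathbf{u}^{(0)}$ of class-$0$ training nodes and the (common) representation $\mathbf{u}^{(1)}$ of class-$1$ training nodes, and let $\mathbf{W}=\mathbf{R}^{\top}(\mathbf{R}\mathbf{R}^{\top})^{-1}\begin{bmatrix}1&0\\0&1\end{bmatrix}$ (the minimum-norm solution of $\mathbf{u}_i\mathbf{W}=\mathbf{y}_i$ for all training nodes $i$; $\mathbf{R}\mathbf{R}^\top$ is invertible under these hypotheses). Let $t$ be a test node of class $0$ (so $\mathbf{y}_t=[1,0]$, $\mathbf{x}_t=[\tfrac12+p,\tfrac12-p]$) of degree $d$ with local homophily ratio $h_t=h+\alpha_t\in[0,1]$, i.e. exactly $h_t d$ of its $d$ neighbors have class $0$. Then the output logit vector $\mathbf{z}_t=\mathbf{u}_t\mathbf{W}$ satisfies $$\mathbf{z}_t=\mathbf{y}_t+b_1'\,[\alpha_t,\ -\alpha_t],\qquad b_1'=\frac{d^2(2h-1)}{1+d^2(2h-1)^2},$$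 equivalently $\mathbf{z}_t=\frac{1}{1+d^2(2h-1)^2}\big[\,1+d^2(2h-1)(h+h_t-1),\ \ d^2(2h-1)(h-h_t)\,\big]$.
   Context: Binary node classification on a simple graph $G$ with adjacency matrix $\mathbf{A}$. Each node $i$ has a class $y_i\in\{0,1\}$, one-hot label vector $\mathbf{y}_i=[1,0]$ if $y_i=0$ and $[0,1]$ if $y_i=1$, and feature vector $\mathbf{x}_i=[\tfrac12+p,\ \tfrac12-p]$ if $y_i=0$ and $\mathbf{x}_i=[\tfrac12-p,\ \tfrac12+p]$ if $y_i=1$, where $p\in[0,\tfrac12]$ is a fixed parameter. $\mathbf{X}$ is the matrix whose rows are the $\mathbf{x}_i$. The local homophily ratio of a node $t$ is the fraction of its neighbors having the same class as $t$. Standing assumption on the training set: every training node has degree exactly $d$ and local homophily ratio exactly $h$ (so it has $hd$ neighbors of its own class and $(1-h)d$ of the other class); consequently all class-$0$ training nodes share one representation $\mathbf{u}^{(0)}$ and all class-$1$ training nodes share one representation $\mathbf{u}^{(1)}$. $N_1(i)$ denotes the set of neighbors of $i$. $\alpha_t=h_t-h$ is the shift of the test node's local homophily from the global homophily $h$. *)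

From HB Require Import structures.
From mathcomp Require Import all_boot all_order all_algebra.
Set Implicit Arguments. Unset Strict Implicit. Unset Printing Implicit Defensive.
Import Order.TTheory GRing.Theory Num.Theory.
Local Open Scope ring_scope.

(* Graph: simple graph on a finite vertex type V, given by an edge relation
   [e : rel V] assumed symmetric and irreflexive.
   Classes: [cls i : bool], with [false] = class 0 and [true] = class 1. *)

Definition simple_graph (V : finType) (e : rel V) : Prop :=
  symmetric e /\ irreflexive e.

Definition nbrs (V : finType) (e : rel V) (i : V) : {set V} := [set j | e i j].

Definition degree (V : finType) (e : rel V) (i : V) : nat := #|nbrs e i|.

Definition local_homophily (R : realFieldType) (V : finType) (e : rel V)
  (cls : V -> bool) (i : V) : R :=
  #|[set j in nbrs e i | cls j == cls i]|%:R / (degree e i)%:R.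

Definition onehot (R : realFieldType) (b : bool) : 'rV[R]_2 :=
  if b then \row_(k < 2) (if k == 1 :> nat then 1 else 0)
  else \row_(k < 2) (if k == 0 :> nat then 1 else 0).

Definition feat (R : realFieldType) (p : R) (b : bool) : 'rV[R]_2 :=
  if b then \row_(k < 2) (if k == 0 :> nat then 1/2 - p else 1/2 + p)
  else \row_(k < 2) (if k == 0 :> nat then 1/2 + p else 1/2 - p).

Definition rep (R : realFieldType) (V : finType) (e : rel V) (cls : V -> bool)
  (p : R) (i : V) : 'rV[R]_(2 + 2) :=
  row_mx (feat p (cls i)) (\sum_(j in nbrs e i) feat p (cls j)).

Definition Rmat (R : realFieldType) (V : finType) (e : rel V) (cls : V -> bool)
  (p : R) (a b : V) : 'M[R]_(2, 2 + 2) :=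
  col_mx (rep e cls p a) (rep e cls p b).

Definition Wmin (R : realFieldType) (V : finType) (e : rel V) (cls : V -> bool)
  (p : R) (a b : V) : 'M[R]_(2 + 2, 2) :=
  let M := Rmat e cls p a b in M^T *m invmx (M *m M^T) *m 1%:M.

From HB Require Import structures.
From mathcomp Require Import all_boot all_order all_algebra ring.
Set Implicit Arguments. Unset Strict Implicit. Unset Printing Implicit Defensive.
Import Order.TTheory GRing.Theory Num.Theory.
Local Open Scope ring_scope.

(* Everything is a computation with inner products of rows.  Write
   <u, v> = u v^T.  For a 2 x n matrix M with rows u0, u1 and a row w, if the
   Gram matrix G = M M^T is invertible and u M^T = w G, then the readout
   u M^T G^-1 equals w; checking u M^T = w G amounts to two scalar equations
   <u, u_i> = w_0 <u0, u_i> + w_1 <u1, u_i>.  On the graph side, a node of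
   degree d and local homophily hh has representation
   [x_c, hh d x_c + (1 - hh) d x_(not c)], so all inner products reduce to the
   two feature products <x_c, x_c> = 1/2 + 2p^2 and <x_c, x_(not c)> =
   1/2 - 2p^2.  The Gram determinant is 4 p^2 (1 + d^2 (2h - 1)^2) (1 + d^2),
   nonzero for p > 0, and solving the two scalar equations gives the
   closed form; the "shift" form y_t + b1' [alpha, -alpha] is an algebraic
   rewriting of it. *)

Lemma det_mx22 (R : comNzRingType) (A : 'M[R]_2) :
  \det A = A 0 0 * A 1 1 - A 0 1 * A 1 0.
Proof.
rewrite (expand_det_row _ 0) !big_ord_recl big_ord0 /cofactor !det_mx11 !mxE /=.
rewrite addr0 expr0 mul1r exprS expr0 mulr1 mulN1r mulrN.
congr (_ * A _ _ - _ * A _ _); try by apply: val_inj.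
by congr (A _ _); apply: val_inj.
Qed.

Section Dot.
Variable R : comUnitRingType.

Definition dotr n (u v : 'rV[R]_n) : R := (u *m v^T) 0 0.

Lemma dotr_row_mx n1 n2 (a c : 'rV[R]_n1) (b d : 'rV[R]_n2) :
  dotr (row_mx a b) (row_mx c d) = dotr a c + dotr b d.
Proof. by rewrite /dotr tr_row_mx mul_row_col mxE. Qed.

Lemma dotr_lin n (x y v : 'rV[R]_n) a b :
  dotr (a *: x + b *: y) v = a * dotr x v + b * dotr y v.
Proof. by rewrite /dotr mulmxDl -!scalemxAl !mxE. Qed.

Lemma dotrC n (u v : 'rV[R]_n) : dotr u v = dotr v u.
Proof. by rewrite /dotr -[v *m _]trmxK trmx_mul trmxK [in RHS]mxE. Qed.

Lemma mulmx_trE m n k (A : 'M[R]_(m, n)) (B : 'M[R]_(k, n)) i j :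
  (A *m B^T) i j = dotr (row i A) (row j B).
Proof. by rewrite /dotr !mxE; apply: eq_bigr => l _; rewrite !mxE. Qed.

Lemma row_col_mx2 n (u0 u1 : 'rV[R]_n) (j : 'I_(1 + 1)) :
  row j (col_mx u0 u1) = if j == 0 :> nat then u0 else u1.
Proof.
by apply/rowP => k; rewrite !mxE; case: splitP => i; rewrite ord1 => ->.
Qed.

Lemma min_norm_readout m n (M : 'M[R]_(m, n)) (u : 'rV[R]_n) (w : 'rV[R]_m) :
  M *m M^T \in unitmx -> u *m M^T = w *m (M *m M^T) ->
  u *m (M^T *m invmx (M *m M^T) *m 1%:M) = w.
Proof. by move=> unitG Hu; rewrite mulmx1 !mulmxA Hu mulmxK. Qed.

Lemma gram2_det n (u0 u1 : 'rV[R]_n) :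
  \det (col_mx u0 u1 *m (col_mx u0 u1)^T) =
  dotr u0 u0 * dotr u1 u1 - dotr u0 u1 ^+ 2.
Proof. by rewrite det_mx22 !mulmx_trE !row_col_mx2 /= (dotrC u1 u0). Qed.

Lemma gram2_readout n (u u0 u1 : 'rV[R]_n) (w : 'rV[R]_2) :
  dotr u u0 = w 0 0 * dotr u0 u0 + w 0 1 * dotr u0 u1 ->
  dotr u u1 = w 0 0 * dotr u0 u1 + w 0 1 * dotr u1 u1 ->
  u *m (col_mx u0 u1)^T = w *m (col_mx u0 u1 *m (col_mx u0 u1)^T).
Proof.
move=> Hu0 Hu1; apply/rowP => j.
rewrite mulmx_trE row_id row_col_mx2 mxE !big_ord_recl big_ord0 addr0 /=.
rewrite !mulmx_trE !row_col_mx2 /=.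
case: j => [[|[|//]] ?] /=; rewrite ?(dotrC u1 u0) (Hu0, Hu1);
  by congr (w 0 _ * _ + w 0 _ * _); apply: val_inj.
Qed.

End Dot.

Section NeighbourAggregation.
Variables (V : finType) (e : rel V) (cls : V -> bool).

Lemma sum_by_class (M : nmodType) (A : {set V}) (f : bool -> M) (c : bool) :
  \sum_(j in A) f (cls j) =
  f c *+ #|[set j in A | cls j == c]| + f (~~ c) *+ #|[set j in A | cls j != c]|.
Proof.
rewrite (bigID (fun j => cls j == c)) /= -!sumr_const.
congr (_ + _); apply: eq_big => [j|j /andP[_ Hj]]; rewrite ?inE //.
  by rewrite (eqP Hj).
by move: Hj; case: (cls j); case: c.
Qed.

Lemma card_by_class (A : {set V}) (c : bool) :
  (#|[set j in A | cls j == c]| + #|[set j in A | cls j != c]|)%N = #|A|.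
Proof.
rewrite -(cardsID [set j | cls j == c] A).
by congr (_ + _)%N; apply: eq_card => j; rewrite !inE andbC.
Qed.

End NeighbourAggregation.

(* Aggregated neighbour features of a class-b node of degree dR and local
   homophily hh: hh dR neighbours of class b, the others of class (not b). *)
Definition nbr_agg (R : realFieldType) (p hh dR : R) (b : bool) : 'rV[R]_2 :=
  (hh * dR) *: feat p b + (dR - hh * dR) *: feat p (~~ b).

Definition urep (R : realFieldType) (p hh dR : R) (b : bool) : 'rV[R]_(2 + 2) :=
  row_mx (feat p b) (nbr_agg p hh dR b).

Lemma rep_by_homophily (R : realFieldType) (V : finType) (e : rel V)
    (cls : V -> bool) (p hh : R) (d : nat) (i : V) :
  (0 < d)%N -> degree e i = d -> local_homophily R e cls i = hh ->
  rep e cls p i = urep p hh d%:R (cls i).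
Proof.
move=> d_gt0 deg_i hom_i.
set same := #|[set j in nbrs e i | cls j == cls i]|.
set other := #|[set j in nbrs e i | cls j != cls i]|.
have same_eq : same%:R = hh * d%:R :> R.
  by rewrite -hom_i /local_homophily deg_i divfK // pnatr_eq0 -lt0n.
have other_eq : other%:R = d%:R - hh * d%:R :> R.
  rewrite -same_eq -deg_i /degree -(card_by_class cls _ (cls i)) natrD.
  by rewrite addrAC subrr add0r.
by rewrite /rep (sum_by_class cls _ _ (cls i)) -!scaler_nat same_eq other_eq.
Qed.

Section FeatureGeometry.
Variables (R : realFieldType) (p : R).

Definition feat_dot (same : bool) : R :=
  if same then 1/2 + 2 * p ^+ 2 else 1/2 - 2 * p ^+ 2.

Lemma dotr_feat (b b' : bool) : dotr (feat p b) (feat p b') = feat_dot (b == b').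
Proof.
rewrite /dotr /feat_dot mxE !big_ord_recl big_ord0 /feat.
by case: b; case: b' => /=; rewrite !mxE /=; field.
Qed.

(* Inner product of two node representations, in terms of the homophily
   ratios: the aggregates agree in class with weight hh hh' + (1-hh)(1-hh'). *)
Lemma dotr_urep (hh hh' dR : R) (b b' : bool) :
  dotr (urep p hh dR b) (urep p hh' dR b') =
  feat_dot (b == b') + dR ^+ 2 *
    ((hh * hh' + (1 - hh) * (1 - hh')) * feat_dot (b == b') +
     (hh * (1 - hh') + (1 - hh) * hh') * feat_dot (b != b')).
Proof.
rewrite /urep dotr_row_mx /nbr_agg dotr_lin !(dotrC _ (_ + _)) !dotr_lin.
by rewrite !dotr_feat; case: b; case: b' => /=; ring.
Qed.

End FeatureGeometry.

Definition heter_denom (R : realFieldType) (h dR : R) : R := 1 + dR ^+ 2 * (2 * h - 1) ^+ 2.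

Lemma heter_denom_gt0 (R : realFieldType) (h dR : R) : 0 < heter_denom h dR.
Proof. by rewrite /heter_denom ltr_pwDl // mulr_ge0 // sqr_ge0. Qed.

Definition logits_closed (R : realFieldType) (h ht dR : R) : 'rV[R]_2 :=
  (heter_denom h dR)^-1 *: \row_(k < 2) (if k == 0 :> nat
                                   then 1 + dR ^+ 2 * (2 * h - 1) * (h + ht - 1)
                                   else dR ^+ 2 * (2 * h - 1) * (h - ht)).

Section TrainedReadout.
Variables (R : realFieldType) (p h dR : R).
Hypothesis p_gt0 : 0 < p.

Let M : 'M[R]_(1 + 1, 2 + 2) := col_mx (urep p h dR false) (urep p h dR true).

Lemma train_gram_det : \det (M *m M^T) = 4 * p ^+ 2 * heter_denom h dR * (1 + dR ^+ 2).
Proof. by rewrite gram2_det !dotr_urep /feat_dot /heter_denom /=; field. Qed.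

Lemma train_gram_unit : M *m M^T \in unitmx.
Proof.
rewrite unitmxE unitfE train_gram_det !mulf_neq0 ?expf_neq0 ?lt0r_neq0 //.
  exact: heter_denom_gt0.
by rewrite ltr_pwDl // sqr_ge0.
Qed.

Lemma readout_class0 (ht : R) :
  urep p ht dR false *m (M^T *m invmx (M *m M^T) *m 1%:M) = logits_closed h ht dR.
Proof.
apply: (min_norm_readout train_gram_unit).
have heter_denom_neq0 := lt0r_neq0 (heter_denom_gt0 h dR).
by apply: gram2_readout; rewrite !dotr_urep !mxE /feat_dot /=;
  rewrite /heter_denom in heter_denom_neq0 *; field; rewrite exprMn.
Qed.

End TrainedReadout.

Lemma logits_shift_form (R : realFieldType) (h ht dR : R) :
  logits_closed h ht dR =
  onehot R false + (dR ^+ 2 * (2 * h - 1) / heter_denom h dR) *: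
    \row_(k < 2) (if k == 0 :> nat then ht - h else - (ht - h)).
Proof.
have heter_denom_neq0 := lt0r_neq0 (heter_denom_gt0 h dR).
apply/rowP => k; rewrite !mxE /=.
by case: k => [[|[|//]] ?] /=; rewrite /heter_denom in heter_denom_neq0 *; field; rewrite exprMn.
Qed.

Theorem theorem2 (R : realFieldType) (V : finType) (e : rel V) (cls : V -> bool)
  (Train : {set V}) (d : nat) (h p : R) (a b t : V) :
  simple_graph e ->
  (1 <= d)%N ->
  0 <= h <= 1 ->
  (exists k : nat, h * d%:R = k%:R) ->
  0 < p <= 1/2 ->
  (* standing assumption on the training set *)
  (forall i, i \in Train -> degree e i = d /\ local_homophily R e cls i = h) ->
  (* the training set contains nodes of both classes; a, b are such nodes *)
  a \in Train -> cls a = false ->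
  b \in Train -> cls b = true ->
  (* test node of class 0 with degree d *)
  cls t = false -> degree e t = d ->
  let ht := local_homophily R e cls t in
  let alpha := ht - h in
  let D := 1 + d%:R ^+ 2 * (2 * h - 1) ^+ 2 in
  let b1 := d%:R ^+ 2 * (2 * h - 1) / D in
  let z := rep e cls p t *m Wmin e cls p a b in
  z = onehot R false + b1 *: \row_(k < 2) (if k == 0 :> nat then alpha else - alpha)
  /\
  z = D^-1 *: \row_(k < 2) (if k == 0 :> nat
                            then 1 + d%:R ^+ 2 * (2 * h - 1) * (h + ht - 1)
                            else d%:R ^+ 2 * (2 * h - 1) * (h - ht)).
Proof.
move=> _ d_gt0 _ _ /andP[p_gt0 _] train a_train cls_a b_train cls_b cls_t deg_t.
move=> ht alpha D b1 z.
have [deg_a hom_a] := train a a_train.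
have [deg_b hom_b] := train b b_train.
have z_closed : z = logits_closed h ht d%:R.
  rewrite /z /Wmin /Rmat (rep_by_homophily p d_gt0 deg_a hom_a).
  rewrite (rep_by_homophily p d_gt0 deg_b hom_b).
  rewrite (rep_by_homophily p d_gt0 deg_t (erefl ht)) cls_a cls_b cls_t.
  exact: readout_class0.
by split; rewrite z_closed // logits_shift_form.
Qed.
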